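(* Let $G$ be a second countable locally compact abelian group, $\varLambda\subseteq G$ a set of finite local complexity, and $\mathcal{A}=(A_n)_n$ a van Hove sequence. Let $F_n=\varLambda\cap A_n$ and assume (a) $\lim_{n\to\infty}\mathrm{card}(F_n)=\infty$, and (b) for all $0\ne t\in\varLambda-\varLambda$, $\mathrm{card}(\varLambda\cap(-t+\varLambda))<\infty$. Then the counting autocorrelation of $\varLambda$ exists with respect to $\mathcal{A}$ and $\gamma_{\mathrm{count}}=\delta_0$.
   Context: Finite local complexity: $\varLambda-\varLambda$ is locally finite (every compact set meets it in finitely many points). A van Hove sequence is a sequence of compact sets $A_n$ of positive Haar measure with $\mathrm{vol}(\partial^K A_n)/\mathrm{vol}(A_n)\to0$ for all compact $K$, where $\partial^K A=((A+K)\setminus A^\circ)\cup((\overline{G\setminus A}-K)\cap A)$. For finite $F$, $\gamma_F=\frac{1}{\mathrm{card}(F)}\sum_{x,y\in F}\delta_{x-y}$ if $F\ne\emptyset$, $\gamma_\emptyset=0$; the counting autocorrelation is the vague limit of $\gamma_{F_n}$. *)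

From HB Require Import structures.
From mathcomp Require Import all_boot all_algebra.
From mathcomp Require Import finmap.
From mathcomp Require Import all_classical all_reals all_analysis.
Set Implicit Arguments. Unset Strict Implicit. Unset Printing Implicit Defensive.
Import GRing.Theory Num.Theory numFieldNormedType.Exports.
Local Open Scope classical_set_scope.
Local Open Scope ring_scope.

(* An abelian topological group G is a [topologicalZmodType].  To equip it
   with its Borel sigma-algebra (the sigma-algebra generated by the open
   sets) we need a pointed copy of G (pointed at 0). *)
Definition ptG (G : topologicalZmodType) : Type := G.
HB.instance Definition _ (G : topologicalZmodType) := Choice.on (ptG G).
HB.instance Definition _ (G : topologicalZmodType) := isPointed.Build (ptG G) 0.

Definition borel_space (G : topologicalZmodType) :=
  g_sigma_algebraType (T := ptG G) (@open G).

Section Defs.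
Variables (R : realType) (G : topologicalZmodType).

Definition diffset (L : set G) : set G := [set x - y | x in L & y in L].

Definition FLC (L : set G) : Prop :=
  forall K : set G, compact K -> finite_set (K `&` diffset L).

Definition is_haar (mu : {measure set (borel_space G) -> \bar R}) : Prop :=
  [/\ forall (x : G) (A : set (borel_space G)), measurable A ->
        mu ((fun a : G => x + a) @` A) = mu A,
      forall K : set G, compact K -> (mu K < +oo)%E,
      forall U : set G, open U -> U !=set0 -> (0 < mu U)%E,
      forall A : set (borel_space G), measurable A ->
        mu A = ereal_inf [set mu U | U in [set U : set G | open U /\ A `<=` U]]
    & forall U : set G, open U ->
        mu U = ereal_sup [set mu K | K in [set K : set G | compact K /\ K `<=` U]]].

Definition kboundary (K A : set G) : set G :=
  ([set a + k | a in A & k in K] `\` interior A) `|`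
  ([set x - k | x in closure (~` A) & k in K] `&` A).

Definition van_Hove (mu : {measure set (borel_space G) -> \bar R})
    (A : nat -> set G) : Prop :=
  (forall n, compact (A n) /\ (0 < mu (A n))%E) /\
  (forall K : set G, compact K ->
     (fun n => fine (mu (kboundary K (A n))) / fine (mu (A n))) @ \oo --> (0 : R)).

Definition card_fin (F : set G) : nat := #|` fset_set F|%fset.

(* gamma_F applied to a test function f:
   gamma_F = 1/card(F) sum_{x,y in F} delta_{x-y}  (and gamma_empty = 0). *)
Definition gammaF (F : set G) (f : G -> R) : R :=
  if card_fin F == 0%N then 0
  else (card_fin F)%:R^-1 *
       \sum_(x <- fset_set F) \sum_(y <- fset_set F) f (x - y).

Definition Cc (f : G -> R) : Prop :=
  continuous f /\ compact (closure [set x | f x != 0]).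

End Defs.

From HB Require Import structures.
From mathcomp Require Import all_boot all_algebra.
From mathcomp Require Import finmap.
From mathcomp Require Import all_classical all_reals all_analysis.
Import order.Order.TTheory GRing.Theory Num.Theory numFieldNormedType.Exports.
Set Implicit Arguments. Unset Strict Implicit. Unset Printing Implicit Defensive.
Local Open Scope classical_set_scope.
Local Open Scope ring_scope.

(* Write gamma_F(f) as f 0 plus 1/card F times the sum of f (x - y) over the pairs
   x <> y of F.  A pair contributes only if x - y lies in the compact support of f
   and in L - L, hence (finite local complexity) in a finite set T of nonzero
   differences; by (b), only finitely many points of L are an endpoint of a
   difference in T.  So the off-diagonal sum is bounded independently of n, and
   dividing by card F_n -> oo kills it. *)

Lemma ler_sum_fsubset (T : choiceType) (R : numDomainType) (S Q : {fset T})
    (h : T -> R) :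
  (S `<=` Q)%fset -> (forall x, x \in Q -> 0 <= h x) ->
  \sum_(x <- S) h x <= \sum_(x <- Q) h x.
Proof.
move=> /fsubsetP SQ h0; rewrite [X in _ <= X](big_fsetID _ (mem S)) /=.
have -> : \sum_(x <- [fset x | x in Q & x \in S]%fset) h x = \sum_(x <- S) h x.
  by apply: eq_fbigl => x; rewrite !inE andb_idl //; apply: SQ.
by rewrite lerDl big_seq sumr_ge0 // => x; rewrite !inE => /andP[/h0].
Qed.

Section Autocorrelation.
Variables (R : realType) (G : topologicalZmodType).
Implicit Types (F L Q T : set G) (f : G -> R).

Definition offdiag_sum F f : R :=
  \sum_(x <- fset_set F) \sum_(y <- fset_set F | y != x) f (x - y).

Definition offdiag_mass Q f : R := offdiag_sum Q (fun x => `|f x|).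

Definition partners L T : set G :=
  [set x | L x /\ exists2 y, L y & T (x - y) \/ T (y - x)].

Definition supp_diffset L f : set G :=
  (closure [set z | f z != 0] `&` diffset L) `\ 0.

Lemma card_fin_neq0_finite F : card_fin F != 0%N -> finite_set F.
Proof.
apply: contraNP => infF; rewrite /card_fin /fset_set.
by case: pselect => // _; rewrite cardfs0.
Qed.

Lemma gammaF_offdiag F f : card_fin F != 0%N ->
  gammaF F f = f 0 + (card_fin F)%:R^-1 * offdiag_sum F f.
Proof.
move=> cF; rewrite /gammaF (negbTE cF).
have -> : \sum_(x <- fset_set F) \sum_(y <- fset_set F) f (x - y) =
          (card_fin F)%:R * f 0 + offdiag_sum F f.
  rewrite /card_fin card_fset_sum1 natr_sum big_distrl -big_split /=.
  apply: eq_big_seq => x xF.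
  by rewrite (bigD1_seq x) ?fset_uniq //= subrr mul1r.
by rewrite mulrDr mulrA mulVf ?mul1r ?pnatr_eq0.
Qed.

Lemma offdiag_sum_setIr F Q f : finite_set F ->
  (forall x y, F x -> F y -> x != y -> f (x - y) != 0 -> Q x /\ Q y) ->
  offdiag_sum F f = offdiag_sum (F `&` Q) f.
Proof.
move=> finF FQ; have finFQ : finite_set (F `&` Q) by apply: finite_setIl.
have sFQF : (fset_set (F `&` Q) `<=` fset_set F)%fset.
  by rewrite -fset_set_sub //; apply: subIsetl.
have vanish x y : F x -> F y -> x != y -> ~ Q x \/ ~ Q y -> f (x - y) = 0.
  move=> Fx Fy xy nQ; case: (eqVneq (f (x - y)) 0) => // /(FQ x y Fx Fy xy).
  by case: nQ => nQ [].
rewrite /offdiag_sum; transitivity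
  (\sum_(x <- fset_set (F `&` Q)) \sum_(y <- fset_set F | y != x) f (x - y)).
  symmetry; apply: big_fset_incl => // x xF.
  rewrite (in_fset_set finFQ) notin_setE => nFQx.
  rewrite big_seq_cond big1 // => y /andP[yF yx].
  move: xF yF; rewrite !in_fset_set // !inE => Fx Fy.
  by apply: vanish; rewrite 1?eq_sym //; left => Qx; apply: nFQx.
apply: eq_big_seq => x xFQ; rewrite big_mkcond [RHS]big_mkcond /=.
symmetry; apply: big_fset_incl => // y yF.
rewrite (in_fset_set finFQ) notin_setE; case: ifP => // yx nFQy.
move: xFQ yF; rewrite !in_fset_set // !inE => -[Fx _] Fy.
by apply: vanish; rewrite 1?eq_sym ?yx //; right => Qy; apply: nFQy.
Qed.

Lemma norm_offdiag_sum_le F f : `|offdiag_sum F f| <= offdiag_mass F f.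
Proof.
apply: (le_trans (ler_norm_sum _ _ _)); apply: ler_sum => x _.
exact: ler_norm_sum.
Qed.

Lemma offdiag_mass_subset Q1 Q2 f : finite_set Q2 -> Q1 `<=` Q2 ->
  offdiag_mass Q1 f <= offdiag_mass Q2 f.
Proof.
move=> finQ2 Q12; have finQ1 : finite_set Q1 by apply: sub_finite_set finQ2.
have sQ : (fset_set Q1 `<=` fset_set Q2)%fset by rewrite -fset_set_sub.
rewrite /offdiag_mass /offdiag_sum; apply: le_trans (_ : _ <=
  \sum_(x <- fset_set Q2) \sum_(y <- fset_set Q1 | y != x) `|f (x - y)|) _.
  by apply: ler_sum_fsubset => // x _; apply: sumr_ge0.
apply: ler_sum => x _; rewrite big_mkcond [X in _ <= X]big_mkcond /=.
by apply: ler_sum_fsubset => // y _; case: ifP.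
Qed.

Lemma dist_gammaF_le F Q f : card_fin F != 0%N -> finite_set Q ->
  (forall x y, F x -> F y -> x != y -> f (x - y) != 0 -> Q x /\ Q y) ->
  `|f 0 - gammaF F f| <= offdiag_mass Q f / (card_fin F)%:R.
Proof.
move=> cF finQ FQ; have finF := card_fin_neq0_finite cF.
rewrite gammaF_offdiag // opprD addrA subrr add0r normrN normrM.
rewrite ger0_norm ?invr_ge0 // mulrC ler_wpM2r ?invr_ge0 //.
rewrite (offdiag_sum_setIr finF FQ); apply: le_trans (norm_offdiag_sum_le _ _) _.
by apply: offdiag_mass_subset => //; apply: subIsetr.
Qed.

Lemma finite_partners L T : finite_set T ->
  (forall t, T t -> finite_set (L `&` [set - t + y | y in L])) ->
  finite_set (partners L T).
Proof.
move=> finT finY; pose Y t := L `&` [set - t + y | y in L].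
apply: (@sub_finite_set _ _ (\bigcup_(t in T) (Y t `|` [set t + y | y in Y t]))).
  move=> x [Lx [y Ly [Txy|Tyx]]].
  - exists (x - y) => //; right; exists y; last by rewrite subrK.
    by split=> //; exists x; rewrite // opprB subrK.
  - by exists (y - x) => //; left; split=> //; exists y; rewrite // opprB subrK.
apply: bigcup_finite => // t Tt; rewrite finite_setU.
by split; [|apply: finite_image]; apply: finY.
Qed.

Lemma offdiag_partners L f x y : L x -> L y -> x != y -> f (x - y) != 0 ->
  partners L (supp_diffset L f) x /\ partners L (supp_diffset L f) y.
Proof.
move=> Lx Ly xy fxy; have Txy : supp_diffset L f (x - y).
  split; last by apply/eqP; rewrite subr_eq0.
  by split; [apply: subset_closure | exists x => //; exists y].
by split; split=> //; [exists y; [|left] | exists x; [|right]].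
Qed.

End Autocorrelation.

Lemma cvg_dist_le_div_unbounded (R : realType) (u : nat -> R) (l B : R)
    (c : nat -> nat) :
  (forall M, exists N, forall n, (N <= n)%N -> (M <= c n)%N) ->
  (forall n, c n != 0%N -> `|l - u n| <= B / (c n)%:R) ->
  u @ \oo --> l.
Proof.
move=> c_unbounded ucB; apply/cvgrPdist_le => e e0.
have [N cN] := c_unbounded (Num.truncn (B / e)).+1.
exists N => // n /cN cn; have cn0 : (0 < c n)%N by apply: leq_trans cn.
apply: le_trans (ucB n _) _; first by rewrite -lt0n.
rewrite ler_pdivrMr ?ltr0n // mulrC -ler_pdivrMr //.
by apply: le_trans (ltW (truncnS_gt _)) _; rewrite ler_nat.
Qed.

Theorem lemma4p1 (R : realType) (G : topologicalZmodType)
    (mu : {measure set (borel_space G) -> \bar R})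
    (L : set G) (A : nat -> set G) :
  hausdorff_space G -> @second_countable G -> locally_compact [set: G] ->
  is_haar mu ->
  FLC L ->
  van_Hove mu A ->
  (forall M : nat, exists N : nat, forall n : nat,
      (N <= n)%N -> (M <= card_fin (L `&` A n))%N) ->
  (forall t : G, diffset L t -> t != 0 ->
      finite_set (L `&` [set - t + y | y in L])) ->
  forall f : G -> R, Cc f ->
    (fun n => gammaF (L `&` A n) f) @ \oo --> f 0.
Proof.
move=> _ _ _ _ flcL _ cardLA finY f [_ cpt_supp].
set T := supp_diffset L f.
have finT : finite_set T by apply: finite_setD; apply: flcL.
have finQ : finite_set (partners L T).
  by apply: finite_partners => // t [[_ Dt] /eqP t0]; apply: finY.
apply: (cvg_dist_le_div_unbounded (B := offdiag_mass (partners L T) f) cardLA).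
move=> n cn; apply: dist_gammaF_le cn finQ _ => x y [Lx _] [Ly _].
exact: offdiag_partners.
Qed.
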